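(* Let $\mathcal{P}$ be a locally finite poset. Then $J\triangleright\zeta_3=\delta_3$; equivalently, for all $(x,y,z)\in\mathcal{F}l^3(\mathcal{P})$, $$\sum_{x\le a\le y\le b\le z}J(x,a,a)\,J(b,b,z)=\delta_3(x,y,z).$$
   Context: $\mathcal{F}l^3(\mathcal{P})=\{(x,y,z)\in\mathcal{P}^3:x\le y\le z\}$. For functions $f,g:\mathcal{F}l^3(\mathcal{P})\to\mathbb{Z}$, define $(f\triangleright g)(x,y,z)=\sum_{x\le a\le y\le b\le z}f(x,a,a)\,g(a,y,b)\,f(b,b,z)$ (sum over $a,b\in\mathcal{P}$). $\zeta_3$ is the constant function $1$ on $\mathcal{F}l^3(\mathcal{P})$, $\delta_3(x,y,z)=1$ if $x=y=z$ and $0$ otherwise, and $J:\mathcal{F}l^3(\mathcal{P})\to\mathbb{Z}$ is the unique function with $\zeta_3\triangleright J=\delta_3$, i.e. $\sum_{x\le a\le y\le b\le z}J(a,y,b)=\delta_3(x,y,z)$ for all $(x,y,z)$. *)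

From HB Require Import structures.
From mathcomp Require Import all_boot all_order all_algebra.
Set Implicit Arguments. Unset Strict Implicit. Unset Printing Implicit Defensive.
Import Order.TTheory GRing.Theory Num.Theory.
Local Open Scope order_scope.

(* A locally finite poset T is given by a porderType together with an
   enumeration [itv x y] of each closed interval [x, y] as a duplicate-free
   list.  Local finiteness of a poset is exactly the existence of such an
   enumeration. *)
Definition is_interval_enum (d : Order.disp_t) (T : porderType d)
  (itv : T -> T -> seq T) : Prop :=
  (forall x y, uniq (itv x y)) /\
  (forall x y a, (a \in itv x y) = (x <= a) && (a <= y)).

Definition delta3 (d : Order.disp_t) (T : porderType d) (x y z : T) : int :=
  ((x == y) && (y == z))%:R.

Definition tri (d : Order.disp_t) (T : porderType d) (itv : T -> T -> seq T)
  (f g : T -> T -> T -> int) (x y z : T) : int :=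
  (\sum_(a <- itv x y) \sum_(b <- itv y z) f x a a * g a y b * f b b z)%R.

Definition zeta3 (d : Order.disp_t) (T : porderType d) (x y z : T) : int := 1%R.

From HB Require Import structures.
From mathcomp Require Import all_boot all_order all_algebra.
Set Implicit Arguments. Unset Strict Implicit. Unset Printing Implicit Defensive.
Import Order.TTheory GRing.Theory Num.Theory.
Local Open Scope order_scope.

(* Setting [z = y], resp. [x = y], in [zeta3 |> J = delta3] says that
   [m a b := J a b b] is a right inverse and [n a b := J a a b] a left inverse
   of the zeta function in the incidence algebra of the poset.  By
   associativity of the incidence product the two inverses agree, i.e.
   [J x x z = J x z z].  The sum to compute then factors as
   [(sum_a n x a) * (sum_b m b z) = delta(x,y) * delta(y,z)]. *)

Section IncidenceAlgebra.

Variables (d : Order.disp_t) (T : porderType d) (itv : T -> T -> seq T).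
Hypothesis itv_enum : is_interval_enum itv.

Local Open Scope ring_scope.

Definition ia_mul (f g : T -> T -> int) (x z : T) : int :=
  \sum_(a <- itv x z) f x a * g a z.

Definition ia_zeta (x z : T) : int := 1.

Definition ia_delta (x z : T) : int := (x == z)%:R.

Lemma itv_uniq x y : uniq (itv x y).
Proof. by case: itv_enum. Qed.

Lemma mem_itv x y a : (a \in itv x y) = (x <= a <= y)%O.
Proof. by case: itv_enum. Qed.

Lemma big_itv_id y (G : T -> int) : \sum_(b <- itv y y) G b = G y.
Proof.
rewrite (perm_big [:: y]) ?big_seq1 //.
by apply: uniq_perm; rewrite ?itv_uniq // => a; rewrite mem_itv inE eq_le andbC.
Qed.

Lemma big_itv_subl x b z (F : T -> int) : (x <= b)%O ->
  \sum_(a <- itv b z) F a = \sum_(a <- itv x z | (b <= a)%O) F a.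
Proof.
move=> xb; rewrite -[RHS]big_filter; apply: perm_big; apply: uniq_perm.
- exact: itv_uniq.
- by rewrite filter_uniq ?itv_uniq.
move=> a; rewrite mem_filter !mem_itv.
by case ba: (b <= a)%O; rewrite //= (le_trans xb ba).
Qed.

Lemma big_itv_subr x b z (F : T -> int) : (b <= z)%O ->
  \sum_(a <- itv x b) F a = \sum_(a <- itv x z | (a <= b)%O) F a.
Proof.
move=> bz; rewrite -[RHS]big_filter; apply: perm_big; apply: uniq_perm.
- exact: itv_uniq.
- by rewrite filter_uniq ?itv_uniq.
move=> a; rewrite mem_filter !mem_itv.
by case ab: (a <= b)%O; rewrite /= ?andbF // (le_trans ab bz).
Qed.

Lemma big_itv_triangle x z (F : T -> T -> int) :
  \sum_(a <- itv x z) \sum_(b <- itv a z) F a b =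
  \sum_(b <- itv x z) \sum_(a <- itv x b) F a b.
Proof.
transitivity (\sum_(a <- itv x z) \sum_(b <- itv x z | (a <= b)%O) F a b).
  by apply: eq_big_seq => a; rewrite mem_itv => /andP[xa _]; apply: big_itv_subl.
rewrite (exchange_big_dep xpredT) //=.
by apply: eq_big_seq => b; rewrite mem_itv => /andP[_ bz]; exact/esym/big_itv_subr.
Qed.

Lemma ia_mulA f g h x z :
  ia_mul (ia_mul f g) h x z = ia_mul f (ia_mul g h) x z.
Proof.
rewrite /ia_mul; under eq_bigr do rewrite mulr_suml.
under [RHS]eq_bigr do rewrite mulr_sumr.
rewrite -big_itv_triangle; apply: eq_bigr => a _; apply: eq_bigr => b _.
by rewrite mulrA.
Qed.

Lemma ia_mul_delta f x z : (x <= z)%O -> ia_mul f ia_delta x z = f x z.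
Proof.
move=> xz; rewrite /ia_mul (bigD1_seq z) ?itv_uniq ?mem_itv ?lexx ?xz //=.
rewrite /ia_delta eqxx mulr1 big1 ?addr0 // => a /negbTE neq_az.
by rewrite neq_az mulr0.
Qed.

Lemma ia_delta_mul f x z : (x <= z)%O -> ia_mul ia_delta f x z = f x z.
Proof.
move=> xz; rewrite /ia_mul (bigD1_seq x) ?itv_uniq ?mem_itv ?lexx ?xz //=.
rewrite /ia_delta eqxx mul1r big1 ?addr0 // => a neq_ax.
by rewrite eq_sym (negbTE neq_ax) mul0r.
Qed.

Lemma ia_linv_eq_rinv f n m :
  (forall x z, (x <= z)%O -> ia_mul n f x z = ia_delta x z) ->
  (forall x z, (x <= z)%O -> ia_mul f m x z = ia_delta x z) ->
  forall x z, (x <= z)%O -> n x z = m x z.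
Proof.
move=> n_linv m_rinv x z xz.
rewrite -ia_mul_delta // -[RHS]ia_delta_mul //.
transitivity (ia_mul n (ia_mul f m) x z).
  by apply: eq_big_seq => a; rewrite mem_itv => /andP[_ az]; rewrite m_rinv.
rewrite -ia_mulA; apply: eq_big_seq => a; rewrite mem_itv => /andP[xa _].
by rewrite n_linv.
Qed.

Lemma tri_zeta_diagr g x y :
  tri itv (@zeta3 d T) g x y y = ia_mul ia_zeta (fun a b => g a b b) x y.
Proof.
by apply: eq_bigr => a _; rewrite big_itv_id /zeta3 /ia_zeta mulr1.
Qed.

Lemma tri_zeta_diagl g y z :
  tri itv (@zeta3 d T) g y y z = ia_mul (fun a b => g a a b) ia_zeta y z.
Proof.
by rewrite /tri big_itv_id; apply: eq_bigr => b _; rewrite /zeta3 /ia_zeta mul1r.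
Qed.

End IncidenceAlgebra.

Theorem corollary5p3 (d : Order.disp_t) (T : porderType d)
  (itv : T -> T -> seq T) (Hitv : is_interval_enum itv)
  (J : T -> T -> T -> int)
  (HJ : forall x y z : T, x <= y -> y <= z ->
          tri itv (@zeta3 d T) J x y z = delta3 x y z) :
  (forall x y z : T, x <= y -> y <= z ->
     tri itv J (@zeta3 d T) x y z = delta3 x y z) /\
  (forall x y z : T, x <= y -> y <= z ->
     (\sum_(a <- itv x y) \sum_(b <- itv y z) J x a a * J b b z)%R
       = delta3 x y z).
Proof.
have m_rinv x y : x <= y ->
    ia_mul itv (@ia_zeta d T) (fun a b => J a b b) x y = ia_delta x y.
  by move=> xy; rewrite -(tri_zeta_diagr Hitv J) HJ // /delta3 eqxx andbT.
have n_linv x y : x <= y ->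
    ia_mul itv (fun a b => J a a b) (@ia_zeta d T) x y = ia_delta x y.
  by move=> xy; rewrite -(tri_zeta_diagl Hitv J) HJ // /delta3 eqxx.
have n_eq_m := ia_linv_eq_rinv Hitv n_linv m_rinv.
have sum_J_xaa x y : x <= y -> (\sum_(a <- itv x y) J x a a)%R = ia_delta x y.
  move=> xy; rewrite -n_linv // /ia_mul /ia_zeta.
  apply: eq_big_seq => a; rewrite (mem_itv Hitv) => /andP[xa _].
  by rewrite n_eq_m // mulr1.
have sum_J_bbz y z : y <= z -> (\sum_(b <- itv y z) J b b z)%R = ia_delta y z.
  move=> yz; rewrite -m_rinv // /ia_mul /ia_zeta.
  by apply: eq_big_seq => b; rewrite (mem_itv Hitv) => /andP[_ bz]; rewrite n_eq_m // mul1r.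
have sum_JJ x y z : x <= y -> y <= z ->
    (\sum_(a <- itv x y) \sum_(b <- itv y z) J x a a * J b b z)%R = delta3 x y z.
  move=> xy yz; under eq_bigr do rewrite -mulr_sumr.
  by rewrite -mulr_suml sum_J_xaa // sum_J_bbz // /delta3 -natrM mulnb.
split=> // x y z xy yz; rewrite -sum_JJ //.
by apply: eq_bigr => a _; apply: eq_bigr => b _; rewrite /zeta3 mulr1.
Qed.
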